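(* Each of the formulas D1 $=i(x,x)$, D2 $=i(i(x,x),i(n(x),n(x)))$, D3 $=i(i(x,x),i(i(y,y),i(i(x,y),i(x,y))))$ has a double-negation-free condensed-detachment proof from the axioms H1 $=i(x,i(y,x))$, H2 $=i(i(x,i(y,z)),i(i(x,y),i(x,z)))$, H3 $=i(i(x,n(x)),n(x))$, H4 $=i(x,i(n(x),y))$.
   Context: Formulas are terms built from propositional variables using the binary connective $i$ (implication) and the unary connective $n$ (negation). Condensed detachment: from a major premiss $i(A,B)$ and a minor premiss $C$, after renaming variables so that the two premisses share no variables, if $A$ and $C$ are unifiable with most general unifier $\sigma$, infer $B\sigma$; alphabetic variants of axioms count as axioms and conclusions may be renamed. A proof is double-negation free if none of its deduced (non-axiom) steps has a subformula of the form $n(n(t))$. *)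

From Stdlib Require Import List.
Import ListNotations.

Inductive form : Type :=
| Var : nat -> form
| Imp : form -> form -> form
| Neg : form -> form.

Fixpoint subst (s : nat -> form) (F : form) : form :=
  match F with
  | Var v => s v
  | Imp A B => Imp (subst s A) (subst s B)
  | Neg A => Neg (subst s A)
  end.

Fixpoint occurs (v : nat) (F : form) : Prop :=
  match F with
  | Var w => v = w
  | Imp A B => occurs v A \/ occurs v B
  | Neg A => occurs v A
  end.

Definition variant (F G : form) : Prop :=
  exists r r' : nat -> nat,
    subst (fun v => Var (r v)) F = G /\ subst (fun v => Var (r' v)) G = F.

Definition is_mgu (s : nat -> form) (A C : form) : Prop :=
  subst s A = subst s C /\
  forall t : nat -> form, subst t A = subst t C ->
    exists u : nat -> form, forall v, t v = subst u (s v).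

Definition cd_step (M N F : form) : Prop :=
  exists A B C s,
    variant M (Imp A B) /\ variant N C /\
    (forall v, occurs v (Imp A B) -> ~ occurs v C) /\
    is_mgu s A C /\ variant (subst s B) F.

Fixpoint subformula (G F : form) : Prop :=
  G = F \/
  match F with
  | Var _ => False
  | Imp A B => subformula G A \/ subformula G B
  | Neg A => subformula G A
  end.

Definition dn_free (F : form) : Prop :=
  forall t, ~ subformula (Neg (Neg t)) F.

Definition x := Var 0.
Definition y := Var 1.
Definition z := Var 2.

Definition H1 := Imp x (Imp y x).
Definition H2 := Imp (Imp x (Imp y z)) (Imp (Imp x y) (Imp x z)).
Definition H3 := Imp (Imp x (Neg x)) (Neg x).
Definition H4 := Imp x (Imp (Neg x) y).
Definition axioms : list form := [H1; H2; H3; H4].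

Inductive dnf_provable : form -> Prop :=
| dnf_ax : forall a F, In a axioms -> variant a F -> dnf_provable F
| dnf_cd : forall M N F, dnf_provable M -> dnf_provable N ->
    cd_step M N F -> dn_free F -> dnf_provable F.

Definition D1 := Imp x x.
Definition D2 := Imp (Imp x x) (Imp (Neg x) (Neg x)).
Definition D3 := Imp (Imp x x) (Imp (Imp y y) (Imp (Imp x y) (Imp x y))).

From Stdlib Require Import List Arith Lia.
Import ListNotations.

(* The three formulas are derived in one table of condensed-detachment steps
   from H1, H2 and H4 alone, none of whose deduced lines contains a double
   negation.  D1 is the usual derivation of I as S K K.  D2 is obtained from
   [¬x ⇒ x ⇒ x], a consequence of H4, by the law [(x ⇒ y ⇒ z) ⇒ x ⇒ y ⇒ y]
   of line 5; D3 is built from the instance [(x ⇒ x) ⇒ x ⇒ x] of D1 by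
   weakening and the prefixed syllogisms of lines 33 and 36.
   Each step is certified by recomputing it: Robinson unification produces an
   idempotent most general unifier [s], i.e. one with [t = t ∘ s] for every
   unifier [t], which witnesses [is_mgu] directly. *)

(** * Substitutions and renamings *)

Lemma subst_ext_occurs (s t : nat -> form) (F : form) :
  (forall v, occurs v F -> s v = t v) -> subst s F = subst t F.
Proof.
  induction F as [v | A IHA B IHB | A IHA]; simpl; intros Hst.
  - apply Hst; reflexivity.
  - rewrite IHA, IHB; auto.
  - rewrite IHA; auto.
Qed.

Lemma subst_ext (s t : nat -> form) (F : form) :
  (forall v, s v = t v) -> subst s F = subst t F.
Proof. intros Hst; apply subst_ext_occurs; auto. Qed.

Lemma subst_Var (F : form) : subst Var F = F.
Proof. induction F; simpl; congruence. Qed.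

Lemma subst_subst (s t : nat -> form) (F : form) :
  subst s (subst t F) = subst (fun v => subst s (t v)) F.
Proof. induction F; simpl; congruence. Qed.

Lemma variant_of_inverse (r r' : nat -> nat) (F : form) :
  (forall v, occurs v F -> r' (r v) = v) ->
  variant F (subst (fun v => Var (r v)) F).
Proof.
  intros Hrr'. exists r, r'. split; [reflexivity |].
  rewrite subst_subst; transitivity (subst Var F); [| apply subst_Var].
  apply subst_ext_occurs; simpl; intros v Hv; rewrite Hrr'; auto.
Qed.

Lemma variant_refl (F : form) : variant F F.
Proof.
  rewrite <- (subst_Var F) at 2.
  apply (variant_of_inverse (fun v => v) (fun v => v)); auto.
Qed.

Definition shift (k : nat) : form -> form := subst (fun v => Var (v + k)).

Lemma variant_shift (k : nat) (F : form) : variant F (shift k F).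
Proof. apply (variant_of_inverse _ (fun v => v - k)); intros; lia. Qed.

Fixpoint max_var (F : form) : nat :=
  match F with
  | Var v => v
  | Imp A B => Nat.max (max_var A) (max_var B)
  | Neg A => max_var A
  end.

Lemma occurs_le_max_var (v : nat) (F : form) : occurs v F -> v <= max_var F.
Proof. induction F; simpl; intuition lia. Qed.

Lemma occurs_shift (k v : nat) (F : form) : occurs v (shift k F) -> k <= v.
Proof. unfold shift; induction F; simpl; intuition lia. Qed.

Fixpoint vars (F : form) : list nat :=
  match F with
  | Var v => [v]
  | Imp A B => vars A ++ vars B
  | Neg A => vars A
  end.

Lemma occurs_vars (v : nat) (F : form) : occurs v F -> In v (vars F).
Proof.
  induction F; simpl; intros Hv.
  - auto.
  - apply in_or_app; tauto.
  - auto.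
Qed.

Fixpoint undup (l : list nat) : list nat :=
  match l with
  | [] => []
  | v :: l => v :: remove Nat.eq_dec v (undup l)
  end.

Lemma In_undup (v : nat) (l : list nat) : In v l -> In v (undup l).
Proof.
  induction l as [| w l IH]; simpl; [tauto |].
  destruct (Nat.eq_dec w v) as [-> | Hwv]; [now left |].
  intros [-> | Hv]; [now left |].
  right; apply in_in_remove; auto.
Qed.

Fixpoint position (v : nat) (l : list nat) : nat :=
  match l with
  | [] => 0
  | w :: l => if Nat.eqb v w then 0 else S (position v l)
  end.

Lemma nth_position (v : nat) (l : list nat) : In v l -> nth (position v l) l 0 = v.
Proof.
  induction l as [| w l IH]; simpl; [tauto |].
  destruct (Nat.eqb_spec v w); intros [-> | Hv]; auto; congruence.
Qed.

(* Numbering the variables in order of first occurrence gives every class of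
   alphabetic variants one representative, so lines can be compared syntactically. *)
Definition canon (F : form) : form :=
  subst (fun v => Var (position v (undup (vars F)))) F.

Lemma variant_canon (F : form) : variant F (canon F).
Proof.
  apply (variant_of_inverse (fun v => position v (undup (vars F)))
                            (fun k => nth k (undup (vars F)) 0)).
  intros v Hv; apply nth_position, In_undup, occurs_vars, Hv.
Qed.

(** * Unification *)

Definition form_eq_dec (F G : form) : {F = G} + {F <> G}.
Proof. decide equality; apply Nat.eq_dec. Defined.

Fixpoint occursb (v : nat) (F : form) : bool :=
  match F with
  | Var w => Nat.eqb v w
  | Imp A B => occursb v A || occursb v B
  | Neg A => occursb v A
  end.

Lemma occursb_complete (v : nat) (F : form) : occurs v F -> occursb v F = true.
Proof.
  induction F; simpl; intros Hv.
  - apply Nat.eqb_eq, Hv.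
  - apply Bool.orb_true_iff; tauto.
  - auto.
Qed.

Definition bind (v : nat) (F : form) (w : nat) : form :=
  if Nat.eqb w v then F else Var w.

Lemma subst_bind_notin (v : nat) (F G : form) :
  occursb v G = false -> subst (bind v F) G = G.
Proof.
  intros Hv; rewrite <- (subst_Var G) at 2; apply subst_ext_occurs.
  intros w Hw; unfold bind; destruct (Nat.eqb_spec w v) as [-> |]; auto.
  apply occursb_complete in Hw; congruence.
Qed.

Definition unifies (s : nat -> form) (E : list (form * form)) : Prop :=
  Forall (fun e => subst s (fst e) = subst s (snd e)) E.

Definition subst_eqn (s : nat -> form) (e : form * form) : form * form :=
  (subst s (fst e), subst s (snd e)).

Fixpoint solve (fuel : nat) (E : list (form * form)) : option (nat -> form) :=
  match fuel with
  | 0 => None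
  | S fuel =>
    match E with
    | [] => Some Var
    | (Var v, F) :: E =>
        if form_eq_dec F (Var v) then solve fuel E
        else if occursb v F then None
        else option_map (fun s w => subst s (bind v F w))
                        (solve fuel (map (subst_eqn (bind v F)) E))
    | (F, Var v) :: E => solve fuel ((Var v, F) :: E)
    | (Imp A B, Imp C D) :: E => solve fuel ((A, C) :: (B, D) :: E)
    | (Neg A, Neg C) :: E => solve fuel ((A, C) :: E)
    | _ => None
    end
  end.

Definition mgu_of (s : nat -> form) (E : list (form * form)) : Prop :=
  unifies s E /\ forall t, unifies t E -> forall v, t v = subst t (s v).

Lemma mgu_of_same_unifiers (s : nat -> form) (E E' : list (form * form)) :
  (forall t, unifies t E <-> unifies t E') -> mgu_of s E -> mgu_of s E'.
Proof.
  intros HEE' [Hs Hgen]; split; [apply HEE', Hs |].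
  intros t Ht; apply Hgen, HEE', Ht.
Qed.

Lemma unifies_cons (t : nat -> form) (F G : form) (E : list (form * form)) :
  unifies t ((F, G) :: E) <-> subst t F = subst t G /\ unifies t E.
Proof. unfold unifies; rewrite Forall_cons_iff; reflexivity. Qed.

Lemma unifies_map_subst_eqn (t s : nat -> form) (E : list (form * form)) :
  unifies t (map (subst_eqn s) E) <-> unifies (fun v => subst t (s v)) E.
Proof.
  unfold unifies, subst_eqn; rewrite Forall_map.
  split; apply Forall_impl; intros e; simpl; rewrite !subst_subst; auto.
Qed.

Lemma mgu_of_bind (v : nat) (F : form) (s : nat -> form) (E : list (form * form)) :
  occursb v F = false -> mgu_of s (map (subst_eqn (bind v F)) E) ->
  mgu_of (fun w => subst s (bind v F w)) ((Var v, F) :: E).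
Proof.
  intros HvF [Hs Hgen].
  assert (HF : subst (bind v F) F = F) by (apply subst_bind_notin, HvF).
  split.
  - apply unifies_cons; split.
    + simpl; rewrite <- subst_subst, HF; unfold bind; rewrite Nat.eqb_refl; reflexivity.
    + apply unifies_map_subst_eqn, Hs.
  - intros t Ht; apply unifies_cons in Ht as [Hv HtE]; simpl in Hv.
    assert (Ht_bind : forall w, t w = subst t (bind v F w)).
    { intros w; unfold bind; destruct (Nat.eqb_spec w v) as [-> |]; auto. }
    assert (Hgen_t : forall w, t w = subst t (s w)).
    { apply Hgen, unifies_map_subst_eqn.
      unfold unifies; eapply Forall_impl; [| exact HtE]; intros e.
      rewrite <- !(subst_ext _ _ _ Ht_bind); auto. }
    intros w; rewrite subst_subst, Ht_bind; apply subst_ext; auto.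
Qed.

Lemma solve_mgu (fuel : nat) (E : list (form * form)) (s : nat -> form) :
  solve fuel E = Some s -> mgu_of s E.
Proof.
  revert E s; induction fuel as [| fuel IH]; [discriminate |].
  intros [| [L R] E] s Hsolve; simpl in Hsolve.
  - injection Hsolve as <-; split; [constructor | reflexivity].
  - assert (Hvar : forall v, solve (S fuel) ((Var v, R) :: E) = Some s ->
                             mgu_of s ((Var v, R) :: E)).
    { clear Hsolve; intros v Hsolve; simpl in Hsolve.
      destruct (form_eq_dec R (Var v)) as [-> |].
      - apply (mgu_of_same_unifiers _ E), IH, Hsolve.
        intros t; rewrite unifies_cons; tauto.
      - destruct (occursb v R) eqn:HvR; [discriminate |].
        destruct (solve fuel _) as [s' |] eqn:Hs'; [| discriminate].
        injection Hsolve as <-; apply mgu_of_bind, IH; auto. }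
    destruct L as [v | A B | A]; [now apply Hvar |..];
      destruct R as [v | C D | C]; try discriminate;
      apply IH in Hsolve; revert Hsolve; apply mgu_of_same_unifiers;
      intros t; rewrite !unifies_cons; simpl; intuition congruence.
Qed.

(* The fuel only bounds the search; [unify_mgu] holds for any value. *)
Definition unify (A C : form) : option (nat -> form) := solve 1000 [(A, C)].

Lemma unify_mgu (A C : form) (s : nat -> form) : unify A C = Some s -> is_mgu s A C.
Proof.
  unfold unify; intros Hs; apply solve_mgu in Hs as [Hs Hgen].
  apply unifies_cons in Hs as [Hs _]; split; [exact Hs |].
  intros t Ht; exists t; apply Hgen, unifies_cons; split; [exact Ht | constructor].
Qed.

(** * Condensed detachment *)

Definition cd (M N : form) : option form :=
  match M with
  | Imp A B => option_map (fun s => canon (subst s B)) (unify A (shift (S (max_var M)) N))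
  | _ => None
  end.

Lemma cd_step_cd (M N F : form) : cd M N = Some F -> cd_step M N F.
Proof.
  destruct M as [| A B |]; unfold cd; try discriminate.
  set (C := shift _ N).
  destruct (unify A C) as [s |] eqn:Hs; intros HF; [| discriminate].
  injection HF as <-.
  exists A, B, C, s; split; [apply variant_refl |].
  split; [apply variant_shift |].
  split; [| split; [apply unify_mgu, Hs | apply variant_canon]].
  intros v HvM HvC; apply occurs_le_max_var in HvM; apply occurs_shift in HvC.
  simpl in HvM, HvC; lia.
Qed.

Fixpoint dn_freeb (F : form) : bool :=
  match F with
  | Var _ => true
  | Imp A B => dn_freeb A && dn_freeb B
  | Neg (Neg _) => false
  | Neg A => dn_freeb A
  end.

Lemma dn_freeb_dn_free (F : form) : dn_freeb F = true -> dn_free F.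
Proof.
  unfold dn_free; induction F as [v | A IHA B IHB | A IHA]; intros HF t Ht; simpl in Ht.
  - destruct Ht as [Ht | []]; discriminate.
  - apply andb_prop in HF as [HA HB].
    destruct Ht as [Ht | [Ht | Ht]]; [discriminate | eapply IHA | eapply IHB]; eauto.
  - destruct Ht as [Ht | Ht].
    + injection Ht as <-; discriminate.
    + destruct A as [| | A']; [destruct Ht as [Ht | []] | eapply IHA | ]; eauto; discriminate.
Qed.

(** * Checking a proof line by line *)

Inductive justification : Type :=
| ByAxiom (k : nat)
| ByCD (major minor : nat).

Definition form_eqb (F G : form) : bool := if form_eq_dec F G then true else false.

Lemma form_eqb_eq (F G : form) : form_eqb F G = true -> F = G.
Proof. unfold form_eqb; destruct (form_eq_dec F G); congruence. Qed.

Definition justified (proven : list form) (F : form) (why : justification) : bool :=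
  match why with
  | ByAxiom k =>
      match nth_error axioms k with Some a => form_eqb a F | None => false end
  | ByCD i j =>
      match nth_error proven i, nth_error proven j with
      | Some M, Some N =>
          match cd M N with Some G => form_eqb G F && dn_freeb F | None => false end
      | _, _ => false
      end
  end.

Lemma justified_provable (proven : list form) (F : form) (why : justification) :
  Forall dnf_provable proven -> justified proven F why = true -> dnf_provable F.
Proof.
  intros Hproven; rewrite Forall_forall in Hproven.
  destruct why as [k | i j]; simpl.
  - destruct (nth_error axioms k) as [a |] eqn:Ha; intros HaF; [| discriminate].
    apply form_eqb_eq in HaF as <-.
    apply (dnf_ax a); [eapply nth_error_In, Ha | apply variant_refl].
  - destruct (nth_error proven i) as [M |] eqn:HM; [| discriminate].
    destruct (nth_error proven j) as [N |] eqn:HN; [| discriminate].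
    destruct (cd M N) as [G |] eqn:HG; intros HF; [| discriminate].
    apply andb_prop in HF as [HGF HF]; apply form_eqb_eq in HGF as <-.
    apply (dnf_cd M N G).
    + eapply Hproven, nth_error_In, HM.
    + eapply Hproven, nth_error_In, HN.
    + apply cd_step_cd, HG.
    + apply dn_freeb_dn_free, HF.
Qed.

Record line : Type := Line {
  line_index : nat;
  line_form : form;
  line_justification : justification
}.

Fixpoint check_lines (proven : list form) (lines : list line) : bool :=
  match lines with
  | [] => true
  | Line n F why :: lines =>
      Nat.eqb n (length proven) && justified proven F why &&
      check_lines (proven ++ [F]) lines
  end.

Lemma check_lines_provable (proven : list form) (lines : list line) :
  Forall dnf_provable proven -> check_lines proven lines = true ->
  Forall dnf_provable (map line_form lines).
Proof.
  revert proven; induction lines as [| [n F why] lines IH]; simpl;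
    intros proven Hproven Hcheck; [constructor |].
  apply andb_prop in Hcheck as [[_ HF]%andb_prop Hlines].
  assert (HF' : dnf_provable F) by (eapply justified_provable; eauto).
  constructor; [exact HF' |].
  apply (IH (proven ++ [F])); [apply Forall_app; auto | exact Hlines].
Qed.

Local Notation "A ⇒ B" := (Imp A B) (at level 55, right associativity).
Local Notation "¬ A" := (Neg A) (at level 35, right associativity).

Definition u := Var 3.
Definition w := Var 4.

Definition hilbert_proof : list line := [
  Line  0 H2 (ByAxiom 1);
  Line  1 H1 (ByAxiom 0);
  Line  2 ((x ⇒ y) ⇒ x ⇒ x) (ByCD 0 1);
  Line  3 D1 (ByCD 2 1);
  Line  4 (x ⇒ (y ⇒ z) ⇒ y ⇒ y) (ByCD 1 2);
  Line  5 ((x ⇒ y ⇒ z) ⇒ x ⇒ y ⇒ y) (ByCD 0 4);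
  Line  6 (((x ⇒ y) ⇒ x) ⇒ (x ⇒ y) ⇒ x) (ByCD 0 2);
  Line  7 (x ⇒ y ⇒ y) (ByCD 1 3);
  Line  8 (((x ⇒ x) ⇒ y) ⇒ x ⇒ x) (ByCD 6 7);
  Line  9 ((x ⇒ x) ⇒ x ⇒ x) (ByCD 8 8);
  Line 10 (x ⇒ y ⇒ z ⇒ y) (ByCD 1 1);
  Line 11 ((x ⇒ y ⇒ x) ⇒ x ⇒ y ⇒ x) (ByCD 9 10);
  Line 12 ((x ⇒ y) ⇒ y ⇒ x ⇒ y) (ByCD 11 10);
  Line 13 (((x ⇒ y) ⇒ x) ⇒ (x ⇒ y) ⇒ y) (ByCD 0 3);
  Line 14 (((x ⇒ x) ⇒ y) ⇒ y) (ByCD 13 7);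
  Line 15 (((x ⇒ x) ⇒ y ⇒ z) ⇒ y ⇒ y) (ByCD 5 14);
  Line 16 (((x ⇒ x) ⇒ x ⇒ y) ⇒ x ⇒ y) (ByCD 13 15);
  Line 17 ((x ⇒ y) ⇒ x ⇒ z ⇒ y) (ByCD 0 10);
  Line 18 H4 (ByAxiom 3);
  Line 19 (x ⇒ y ⇒ ¬ y ⇒ z) (ByCD 1 18);
  Line 20 ((¬ x ⇒ y) ⇒ x ⇒ ¬ x ⇒ y) (ByCD 11 19);
  Line 21 ((¬ x ⇒ y) ⇒ x ⇒ x) (ByCD 5 20);
  Line 22 ((¬ x ⇒ y) ⇒ z ⇒ x ⇒ x) (ByCD 17 21);
  Line 23 (¬ x ⇒ x ⇒ x) (ByCD 16 22);
  Line 24 ((x ⇒ x) ⇒ ¬ x ⇒ x ⇒ x) (ByCD 12 23);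
  Line 25 D2 (ByCD 5 24);
  Line 26 (x ⇒ (y ⇒ z ⇒ u) ⇒ (y ⇒ z) ⇒ y ⇒ u) (ByCD 1 0);
  Line 27 ((x ⇒ y ⇒ z ⇒ u) ⇒ x ⇒ (y ⇒ z) ⇒ y ⇒ u) (ByCD 0 26);
  Line 28 ((x ⇒ y) ⇒ (z ⇒ x) ⇒ z ⇒ y) (ByCD 27 1);
  Line 29 ((x ⇒ y) ⇒ z ⇒ (u ⇒ x) ⇒ u ⇒ y) (ByCD 17 28);
  Line 30 ((x ⇒ y) ⇒ (z ⇒ u ⇒ x) ⇒ z ⇒ u ⇒ y) (ByCD 27 29);
  Line 31 (((x ⇒ y) ⇒ z ⇒ u ⇒ x) ⇒ (x ⇒ y) ⇒ z ⇒ u ⇒ y) (ByCD 0 30);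
  Line 32 (x ⇒ ((y ⇒ z) ⇒ u ⇒ w ⇒ y) ⇒ (y ⇒ z) ⇒ u ⇒ w ⇒ z) (ByCD 1 31);
  Line 33 ((x ⇒ (y ⇒ z) ⇒ u ⇒ w ⇒ y) ⇒ x ⇒ (y ⇒ z) ⇒ u ⇒ w ⇒ z) (ByCD 0 32);
  Line 34 (((x ⇒ y) ⇒ z ⇒ x) ⇒ (x ⇒ y) ⇒ z ⇒ y) (ByCD 0 28);
  Line 35 (x ⇒ ((y ⇒ z) ⇒ u ⇒ y) ⇒ (y ⇒ z) ⇒ u ⇒ z) (ByCD 1 34);
  Line 36 ((x ⇒ (y ⇒ z) ⇒ u ⇒ y) ⇒ x ⇒ (y ⇒ z) ⇒ u ⇒ z) (ByCD 0 35);
  Line 37 ((x ⇒ x) ⇒ y ⇒ x ⇒ x) (ByCD 17 9);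
  Line 38 ((x ⇒ x) ⇒ (x ⇒ y) ⇒ x ⇒ y) (ByCD 36 37);
  Line 39 ((x ⇒ x) ⇒ y ⇒ (x ⇒ z) ⇒ x ⇒ z) (ByCD 17 38);
  Line 40 ((x ⇒ x) ⇒ (y ⇒ z) ⇒ (x ⇒ y) ⇒ x ⇒ z) (ByCD 33 39);
  Line 41 D3 (ByCD 33 40)
].

Lemma hilbert_proof_checks : check_lines [] hilbert_proof = true.
Proof. vm_compute; reflexivity. Qed.

Theorem lemma7 : dnf_provable D1 /\ dnf_provable D2 /\ dnf_provable D3.
Proof.
  pose proof (check_lines_provable [] hilbert_proof (Forall_nil _) hilbert_proof_checks)
    as Hlines.
  rewrite Forall_forall in Hlines.
  repeat split; apply Hlines; simpl; tauto.
Qed.
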